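(* Let $\Gamma$ be a graph. If $\Gamma$ is edge-transitive (respectively, arc-transitive), then $\Gamma$ is lobe-transitive and every lobe of $\Gamma$, regarded as a graph in its own right, is edge-transitive (respectively, arc-transitive).
   Context: All graphs are simple, connected, and finite or countably infinite. For edges $e_1,e_2$ write $e_1\cong e_2$ if $e_1=e_2$ or they lie on a common cycle; a lobe is the subgraph induced by an equivalence class of this relation (a cut-edge with its ends, or a maximal biconnected subgraph). $\Gamma$ is lobe-transitive if $\mathrm{Aut}(\Gamma)$ acts transitively on the set of lobes. An arc is an ordered pair of adjacent vertices; arc-transitive means the automorphism group acts transitively on arcs. *)

From mathcomp Require Import all_boot.
From Stdlib Require Import Relations.
Set Implicit Arguments. Unset Strict Implicit. Unset Printing Implicit Defensive.

(* A graph is a vertex type V with an adjacency relation adj (Prop-valued).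
   Edges are represented by ordered pairs (a,b) with adj a b, identified up to swap. *)

Definition simple_graph (V : Type) (adj : V -> V -> Prop) : Prop :=
  (forall x y, adj x y -> adj y x) /\ (forall x, ~ adj x x).

Definition connected_graph (V : Type) (adj : V -> V -> Prop) : Prop :=
  forall x y, clos_refl_trans V adj x y.

Definition same_edge (V : Type) (e f : V * V) : Prop :=
  (e.1 = f.1 /\ e.2 = f.2) \/ (e.1 = f.2 /\ e.2 = f.1).

Definition is_edge (V : Type) (adj : V -> V -> Prop) (e : V * V) : Prop := adj e.1 e.2.

Definition is_cycle (V : Type) (adj : V -> V -> Prop) (n : nat) (c : nat -> V) : Prop :=
  3 <= n /\
  (forall i j, i < n -> j < n -> c i = c j -> i = j) /\
  (forall i, i < n -> adj (c i) (c (i.+1 %% n))).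

Definition edge_on_cycle (V : Type) (n : nat) (c : nat -> V) (e : V * V) : Prop :=
  exists2 i, i < n & same_edge e (c i, c (i.+1 %% n)).

Definition edge_cong (V : Type) (adj : V -> V -> Prop) (e1 e2 : V * V) : Prop :=
  same_edge e1 e2 \/
  exists n c, is_cycle adj n c /\ edge_on_cycle n c e1 /\ edge_on_cycle n c e2.

Definition is_aut (V : Type) (adj : V -> V -> Prop) (g : V -> V) : Prop :=
  bijective g /\ forall x y, adj x y <-> adj (g x) (g y).

Definition edge_transitive (V : Type) (adj : V -> V -> Prop) : Prop :=
  forall e f, is_edge adj e -> is_edge adj f ->
    exists g, is_aut adj g /\ same_edge (g e.1, g e.2) f.

Definition arc_transitive (V : Type) (adj : V -> V -> Prop) : Prop :=
  forall a b c d, adj a b -> adj c d ->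
    exists g, is_aut adj g /\ g a = c /\ g b = d.

(* The lobe containing the edge e0: its edges are the edges f with f ≅ e0,
   its vertices the endpoints of those edges. *)
Definition lobe_vertex (V : Type) (adj : V -> V -> Prop) (e0 : V * V) (v : V) : Prop :=
  exists w, adj v w /\ edge_cong adj (v, w) e0.

Definition lobe_type (V : Type) (adj : V -> V -> Prop) (e0 : V * V) : Type :=
  {v : V | lobe_vertex adj e0 v}.

Definition lobe_adj (V : Type) (adj : V -> V -> Prop) (e0 : V * V)
  (x y : lobe_type adj e0) : Prop :=
  adj (proj1_sig x) (proj1_sig y) /\ edge_cong adj (proj1_sig x, proj1_sig y) e0.

Definition lobe_transitive (V : Type) (adj : V -> V -> Prop) : Prop :=
  forall e1 e2, is_edge adj e1 -> is_edge adj e2 ->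
    exists g, is_aut adj g /\
      forall f, is_edge adj f ->
        (edge_cong adj f e1 <-> edge_cong adj (g f.1, g f.2) e2).

(* The relation "equal or on a common cycle" is an equivalence on edges.  For
   transitivity, let the cycle C1 carry e1 and e2 and the cycle C2 carry e2 and
   e3, with e3 not on C1.  Removing e2 from C2 leaves a path between two vertices
   of C1 through e3; its segment through e3 between consecutive visits to C1 is
   an ear a...b of C1, and closing this ear with the arc of C1 from a to b that
   carries e1 gives a cycle through e1 and e3.  Automorphisms preserve the
   relation, so an automorphism sending an edge e onto an edge f maps the lobe
   of e onto the lobe of f; when e and f lie in one lobe it restricts to an
   automorphism of that lobe, which is all that edge- and arc-transitivity of a
   lobe ask for. *)

From mathcomp Require Import all_boot boolp.
Set Implicit Arguments. Unset Strict Implicit. Unset Printing Implicit Defensive.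

Section EdgeLists.

Variable V : eqType.

Definition walk_edges (x : V) (p : seq V) : seq (V * V) := pairmap pair x p.

Definition cycle_edges (s : seq V) : seq (V * V) :=
  if s is x :: p then walk_edges x (rcons p x) else [::].

Definition on_edges (E : seq (V * V)) (f : V * V) : bool :=
  (f \in E) || (swap_pair f \in E).

Lemma on_edges_cat E1 E2 f : on_edges (E1 ++ E2) f = on_edges E1 f || on_edges E2 f.
Proof. by rewrite /on_edges !mem_cat orbACA. Qed.

Lemma on_edges_rev_swap E f : on_edges (rev (map swap_pair E)) f = on_edges E f.
Proof.
have mem_swap g : (g \in map swap_pair E) = (swap_pair g \in E).
  by rewrite -{1}[g]swap_pairK (mem_map (can_inj swap_pairK)).
by rewrite /on_edges !mem_rev !mem_swap swap_pairK orbC.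
Qed.

Lemma on_edges_same E f g : same_edge f g -> on_edges E f = on_edges E g.
Proof.
by case: f g => [a b] [c d] [] [/= -> ->]; rewrite /on_edges // orbC.
Qed.

Lemma on_edges_nthP E f x0 :
  reflect (exists2 i, i < size E & same_edge f (nth x0 E i)) (on_edges E f).
Proof.
apply: (iffP orP) => [[] /(nthP x0) [i ltiE Ei]|[i ltiE]].
- by exists i; rewrite // Ei; left.
- by exists i; rewrite // Ei; case: f {Ei} => a b; right.
case: f (nth x0 E i) (mem_nth x0 ltiE) => [a b] [c d] cdE [] [/= -> ->]; first by left.
by right.
Qed.

Lemma walk_edges_rev x p y :
  walk_edges y (rcons (rev p) x) = rev (map swap_pair (walk_edges x (rcons p y))).
Proof.
elim: p x => [|z p IHp] x //=.
rewrite rev_cons -cats1 /walk_edges pairmap_cat -/(walk_edges _ _) IHp last_rcons.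
by rewrite rev_cons cats1.
Qed.

Lemma cycle_edges_cat x p y q :
  cycle_edges (x :: p ++ y :: q) = walk_edges x (rcons p y) ++ walk_edges y (rcons q x).
Proof.
by rewrite /= rcons_cat rcons_cons /walk_edges pairmap_cat -[rcons p y]cats1 pairmap_cat -catA.
Qed.

Lemma mem_cycle_edges_catC p q : cycle_edges (p ++ q) =i cycle_edges (q ++ p).
Proof.
case: p => [|x p]; first by rewrite cats0.
case: q => [|y q]; first by rewrite cats0.
by move=> g; rewrite !cat_cons !cycle_edges_cat !mem_cat orbC.
Qed.

Lemma mem_cycle_edges_rot n s : cycle_edges (rot n s) =i cycle_edges s.
Proof. by move=> g; rewrite /rot mem_cycle_edges_catC cat_take_drop. Qed.

Lemma size_cycle_edges s : size (cycle_edges s) = size s.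
Proof. by case: s => [|x p] //=; rewrite size_pairmap size_rcons. Qed.

Lemma nth_cycle_edges x0 s i : i < size s ->
  nth (x0, x0) (cycle_edges s) i = (nth x0 s i, nth x0 s (i.+1 %% size s)).
Proof.
case: s => [|x p] //= ltip; rewrite (nth_pairmap x0) ?size_rcons // -rcons_cons !nth_rcons /=.
rewrite ltip; case: (ltngtP i (size p)) => [ltip'|ltpi|->]; last by rewrite modnn.
  by rewrite modn_small.
by move: ltip; rewrite ltnS leqNgt ltpi.
Qed.

Lemma eq_on_edges E1 E2 : E1 =i E2 -> on_edges E1 =1 on_edges E2.
Proof. by move=> E12 f; rewrite /on_edges !E12. Qed.

Lemma ear_of_walk (S : seq V) x p f :
  x \in S -> last x p \in S -> on_edges (walk_edges x p) f ->
  exists a q b, [/\ a \in S, b \in S, all [predC S] q,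
    infix (a :: rcons q b) (x :: p) & on_edges (walk_edges a (rcons q b)) f].
Proof.
have [n] := ubnP (size p); elim: n x p => // n IHn x p lt_pn xS pS fp.
have p_S : has [in S] p.
  by case: p pS fp {lt_pn} => // y p' pS _; apply/hasP; exists (last y p'); rewrite ?mem_last.
case: (split_find p_S) lt_pn pS fp => b q p' bS qS lt_pn pS.
rewrite /walk_edges pairmap_cat last_rcons on_edges_cat => /orP [fq | fp'].
  by exists x, q, b; rewrite all_predC -cat_cons prefix_infix.
have [||a [q' [b' [aS b'S q'S q'p' fq']]]] := IHn b p' _ bS _ fp'.
- by move: lt_pn; rewrite size_cat size_rcons addSn ltnS; apply: leq_ltn_trans; rewrite leq_addl.
- by move: pS; rewrite last_cat last_rcons.
exists a, q', b'; split=> //; apply: (infix_trans q'p').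
by rewrite cat_rcons -cat_cons suffix_infix.
Qed.

End EdgeLists.

Section SimpleCycles.

Variables (V : eqType) (e : rel V).

Definition upath (a : V) (p : seq V) (b : V) : bool :=
  path e a (rcons p b) && uniq (a :: rcons p b).

Definition simple_cycle (s : seq V) : bool := [&& cycle e s, uniq s & 2 < size s].

Lemma path_walk_edges x p : path e x p = all (fun g => e g.1 g.2) (walk_edges x p).
Proof. by elim: p x => [|y p IHp] x //=; rewrite IHp. Qed.

Lemma cycle_cycle_edges s : cycle e s = all (fun g => e g.1 g.2) (cycle_edges s).
Proof. by case: s => [|x p] //; exact: path_walk_edges. Qed.

Lemma upath_infix x p y a q b :
  infix (a :: rcons q b) (x :: rcons p y) -> upath x p y -> upath a q b.
Proof.
move=> qp /andP [pp up]; apply/andP.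
by split; [exact: (infix_sorted qp pp) | exact: (infix_uniq qp up)].
Qed.

Lemma simple_cycle_catC p q : simple_cycle (p ++ q) = simple_cycle (q ++ p).
Proof. by rewrite /simple_cycle cycle_catC uniq_catC !size_cat addnC. Qed.

Lemma simple_cycle_upath a p b q : simple_cycle (a :: p ++ b :: q) -> upath a p b.
Proof.
case/and3P=> cyc_s uniq_s _; apply/andP; split.
  by move: cyc_s; rewrite /= rcons_cat rcons_cons -cat_rcons cat_path => /andP [].
by move: uniq_s; rewrite -cat_rcons -cat_cons cat_uniq => /andP [].
Qed.

Hypothesis e_sym : symmetric e.

Lemma upath_rev a p b : upath b (rev p) a = upath a p b.
Proof.
rewrite /upath.
have -> : b :: rcons (rev p) a = rev (a :: rcons p b) by rewrite rev_cons rev_rcons.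
rewrite rev_uniq -rev_cons -(belast_rcons a p b) -{1}(last_rcons a p b) rev_path.
by rewrite (eq_path (e' := e)).
Qed.

Lemma simple_cycle_join a p b q :
  upath a p b -> upath a q b -> all [predC p] q -> 0 < size p + size q ->
  exists2 s, simple_cycle s & forall f, on_edges (cycle_edges s) f =
    on_edges (walk_edges a (rcons p b)) f || on_edges (walk_edges a (rcons q b)) f.
Proof.
move=> abp abq qp pq_gt0; exists (a :: p ++ b :: rev q); last first.
  by move=> f; rewrite cycle_edges_cat walk_edges_rev on_edges_cat on_edges_rev_swap.
have /andP [_ uniq_q] := abq; rewrite -upath_rev in abq.
case/andP: abp abq => path_p uniq_p /andP [path_rq _].
rewrite /simple_cycle /= rcons_cat rcons_cons -cat_rcons cat_path last_rcons path_p path_rq /=.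
rewrite size_cat /= size_rev addnS !ltnS pq_gt0 andbT.
rewrite -[_ && _]/(uniq (a :: p ++ b :: rev q)) -cat_rcons -cat_cons cat_uniq uniq_p.
rewrite has_rev rev_uniq.
move: uniq_q; rewrite /= mem_rcons in_cons negb_or rcons_uniq => /andP [/andP [_ aq] /andP [bq ->]].
rewrite andbT; apply/hasPn => v vq; rewrite in_cons mem_rcons in_cons !negb_or.
by rewrite (memPn aq v vq) (memPn bq v vq); exact: (allP qp v vq).
Qed.

Lemma simple_cycle_rot n s : simple_cycle (rot n s) = simple_cycle s.
Proof. by rewrite /rot simple_cycle_catC cat_take_drop. Qed.

Lemma cycle_edges_adj s (f : V * V) : cycle e s -> on_edges (cycle_edges s) f -> e f.1 f.2.
Proof.
rewrite cycle_cycle_edges => /allP s_e /orP [/s_e // | /s_e].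
by case: f => a b; rewrite /= e_sym.
Qed.

Lemma mem_cycle_edges s (f : V * V) : on_edges (cycle_edges s) f -> (f.1 \in s) && (f.2 \in s).
Proof.
case: s => [|x0 p] // /(on_edges_nthP _ _ (x0, x0)) [i].
rewrite size_cycle_edges => lt_ip; rewrite nth_cycle_edges //.
by case: f => a b [] [/= -> ->]; rewrite !mem_nth ?ltn_pmod.
Qed.

Lemma simple_cycle_split s a b : simple_cycle s -> a \in s -> b \in s -> a != b ->
  exists p q, [/\ upath a p b, upath a q b, {subset p ++ q <= s} &
    forall f, on_edges (cycle_edges s) f =
      on_edges (walk_edges a (rcons p b)) f || on_edges (walk_edges a (rcons q b)) f].
Proof.
move=> cs a_s b_s ab; case: (rot_to a_s) => i s' rot_s.
have b_s' : b \in s' by move: b_s; rewrite -(mem_rot i) rot_s in_cons eq_sym (negbTE ab).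
case/splitPr: b_s' rot_s => r t rot_s.
rewrite -(simple_cycle_rot i) rot_s in cs.
exists r, (rev t); split.
- exact: simple_cycle_upath cs.
- by rewrite upath_rev; apply: (simple_cycle_upath (q := r)); rewrite -cat_cons simple_cycle_catC.
- move=> v; rewrite -(mem_rot i s) rot_s mem_cat mem_rev in_cons mem_cat in_cons.
  by case/orP=> ->; rewrite !orbT.
move=> f; rewrite -(eq_on_edges (mem_cycle_edges_rot i s)) rot_s cycle_edges_cat on_edges_cat.
by rewrite -[in walk_edges b _](revK t) walk_edges_rev on_edges_rev_swap.
Qed.

Lemma simple_cycle_arc s a b f : simple_cycle s -> a \in s -> b \in s -> a != b ->
  on_edges (cycle_edges s) f ->
  exists p, [/\ upath a p b, {subset p <= s}, on_edges (walk_edges a (rcons p b)) f &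
    forall g, on_edges (walk_edges a (rcons p b)) g -> on_edges (cycle_edges s) g].
Proof.
move=> cs a_s b_s ab; have [p [q [pP qP pq_s E]]] := simple_cycle_split cs a_s b_s ab.
rewrite E => /orP [f_p | f_q]; [exists p | exists q]; split=> // [v v_pq | g g_pq];
  by rewrite ?E ?g_pq ?orbT // pq_s // mem_cat v_pq ?orbT.
Qed.

Hypothesis e_irr : irreflexive e.

Lemma simple_cycle_ear s1 s2 f2 f3 :
  simple_cycle s1 -> simple_cycle s2 -> on_edges (cycle_edges s1) f2 ->
  on_edges (cycle_edges s2) f2 -> on_edges (cycle_edges s2) f3 ->
  exists a q b, [/\ a \in s1, b \in s1, all [predC s1] q, upath a q b &
    on_edges (walk_edges a (rcons q b)) f3].
Proof.
case: f2 => u v cs1 cs2 uv_s1 uv_s2 f3_s2.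
have /andP [u_s1 v_s1] := mem_cycle_edges uv_s1.
have /andP [u_s2 v_s2] := mem_cycle_edges uv_s2.
have uv : u != v.
  by apply: contraTneq (cycle_edges_adj (proj1 (andP cs2)) uv_s2) => /= ->; rewrite e_irr.
have [W [WP _ f3_W _]] := simple_cycle_arc cs2 u_s2 v_s2 uv f3_s2.
have [|a [q [b [a_s1 b_s1 q_s1 qW f3_q]]]] := ear_of_walk u_s1 _ f3_W.
  by rewrite last_rcons.
by exists a, q, b; split=> //; apply: upath_infix qW WP.
Qed.

Lemma simple_cycle_exchange s1 s2 f1 f2 f3 :
  simple_cycle s1 -> simple_cycle s2 ->
  on_edges (cycle_edges s1) f1 -> on_edges (cycle_edges s1) f2 ->
  on_edges (cycle_edges s2) f2 -> on_edges (cycle_edges s2) f3 ->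
  exists2 s, simple_cycle s & on_edges (cycle_edges s) f1 && on_edges (cycle_edges s) f3.
Proof.
move=> cs1 cs2 f1_s1 f2_s1 f2_s2 f3_s2.
have [f3_s1 | f3_n_s1] := boolP (on_edges (cycle_edges s1) f3).
  by exists s1; rewrite ?f1_s1.
have [a [q [b [a_s1 b_s1 q_s1 qQ f3_q]]]] := simple_cycle_ear cs1 cs2 f2_s1 f2_s2 f3_s2.
have ab : a != b.
  by case/andP: qQ => _; rewrite /= mem_rcons in_cons negb_or => /andP [/andP []].
have [p [pP p_s1 f1_p p_s1E]] := simple_cycle_arc cs1 a_s1 b_s1 ab f1_s1.
have [||s cs E] := simple_cycle_join pP qQ.
- by apply/allP => v /(allP q_s1); apply: contra; exact: p_s1.
- (* If p and q are both empty, the ear is the arc p itself, so f3 would lie on s1. *)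
  rewrite addn_gt0 !lt0n !size_eq0; apply: contraNT f3_n_s1.
  by case/norP=> /negbNE/eqP p0 /negbNE/eqP q0; apply: p_s1E; rewrite p0 -q0.
by exists s; rewrite // !E f1_p f3_q orbT.
Qed.

End SimpleCycles.

Lemma same_edge_sym (V : Type) (f g : V * V) : same_edge f g -> same_edge g f.
Proof. by case: f g => [a b] [c d] [] [/= -> ->]; [left | right]. Qed.

Lemma same_edge_trans (V : Type) (f g h : V * V) :
  same_edge f g -> same_edge g h -> same_edge f h.
Proof.
by case: f g h => [a b] [c d] [u v] [] [/= -> ->] [] [/= -> ->]; [left | right | right | left].
Qed.

Lemma same_edge_map (U V : Type) (g : U -> V) (f1 f2 : U * U) :
  same_edge f1 f2 -> same_edge (g f1.1, g f1.2) (g f2.1, g f2.2).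
Proof. by case: f1 f2 => [a b] [c d] [] [/= -> ->]; [left | right]. Qed.

Lemma same_edge_inj (U V : Type) (g : U -> V) (a b c d : U) : injective g ->
  same_edge (g a, g b) (g c, g d) -> same_edge (a, b) (c, d).
Proof. by move=> g_inj [] [/= /g_inj -> /g_inj ->]; [left | right]. Qed.

Section Automorphisms.

Variables (V : Type) (adj : V -> V -> Prop).

Lemma edge_cong_sym (f g : V * V) : edge_cong adj f g -> edge_cong adj g f.
Proof.
by case=> [fg | [n [c [cc [fc gc]]]]]; [left; apply: same_edge_sym | right; exists n, c].
Qed.

Lemma is_aut_inv g : is_aut adj g -> exists h, [/\ is_aut adj h, cancel g h & cancel h g].
Proof.
case=> -[h gK hK] g_adj; exists h; split=> //; split; first exact: Bijective hK gK.
by move=> x y; rewrite (g_adj (h x)) !hK.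
Qed.

Lemma edge_cong_aut g (f1 f2 : V * V) : is_aut adj g ->
  edge_cong adj f1 f2 -> edge_cong adj (g f1.1, g f1.2) (g f2.1, g f2.2).
Proof.
case=> /bij_inj g_inj g_adj [f12 | [n [c [[n_gt2 [c_inj c_adj]] [[i lt_in f1_i] [j lt_jn f2_j]]]]]].
  by left; apply: same_edge_map.
right; exists n, (g \o c); split; [split=> // | split].
- by split=> [i' j' lt_i' lt_j' /g_inj | i' /c_adj /g_adj]; [exact: c_inj |].
- by exists i => //; exact: (same_edge_map g f1_i).
- by exists j => //; exact: (same_edge_map g f2_j).
Qed.

Lemma edge_cong_autE g (f1 f2 : V * V) : is_aut adj g ->
  edge_cong adj (g f1.1, g f1.2) (g f2.1, g f2.2) <-> edge_cong adj f1 f2.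
Proof.
move=> g_aut; split; last exact: edge_cong_aut.
have [h [h_aut gK _]] := is_aut_inv g_aut.
by move/(edge_cong_aut h_aut); rewrite /= !gK; case: f1 f2 => [? ?] [? ?].
Qed.

Lemma edge_transitive_of_arc_transitive :
  arc_transitive adj -> edge_transitive adj.
Proof.
move=> adj_at e f e_adj f_adj; have [g [g_aut [ge1 ge2]]] := adj_at _ _ _ _ e_adj f_adj.
by exists g; split=> //; left.
Qed.

End Automorphisms.

Section Lobes.

Variables (V : eqType) (adj : V -> V -> Prop).

Local Notation adjb := (fun x y => `[< adj x y >]).

Lemma nth_cycle_edges_mkseq n (c : nat -> V) i : i < n ->
  nth (c 0, c 0) (cycle_edges (mkseq c n)) i = (c i, c (i.+1 %% n)).
Proof.
move=> lt_in; have n_gt0 : 0 < n by apply: leq_ltn_trans lt_in.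
by rewrite nth_cycle_edges size_mkseq // !nth_mkseq ?ltn_pmod.
Qed.

Lemma is_cycle_mkseq n (c : nat -> V) : is_cycle adj n c <-> simple_cycle adjb (mkseq c n).
Proof.
rewrite /is_cycle /simple_cycle size_mkseq cycle_cycle_edges.
split=> [[n_gt2 [c_inj c_adj]] | /and3P [c_cyc c_uniq n_gt2]].
  rewrite n_gt2 andbT; apply/andP; split; last exact/mkseq_uniqP.
  apply/(all_nthP (c 0, c 0)) => i; rewrite size_cycle_edges size_mkseq => lt_in.
  by rewrite nth_cycle_edges_mkseq //; apply/asboolP/c_adj.
split=> //; split=> [|i lt_in]; first exact/mkseq_uniqP.
move/all_nthP: c_cyc => /(_ (c 0, c 0) i); rewrite size_cycle_edges size_mkseq.
by rewrite nth_cycle_edges_mkseq // => /(_ lt_in)/asboolP.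
Qed.

Lemma edge_on_cycle_mkseq n (c : nat -> V) (f : V * V) :
  edge_on_cycle n c f <-> on_edges (cycle_edges (mkseq c n)) f.
Proof.
rewrite /edge_on_cycle; split=> [[i lt_in f_i] | /(on_edges_nthP _ _ (c 0, c 0)) [i]].
  apply/(on_edges_nthP _ _ (c 0, c 0)); exists i; rewrite ?size_cycle_edges ?size_mkseq //.
  by rewrite nth_cycle_edges_mkseq.
by rewrite size_cycle_edges size_mkseq => lt_in; rewrite nth_cycle_edges_mkseq //; exists i.
Qed.

Lemma edge_congE (f g : V * V) : edge_cong adj f g <-> same_edge f g \/
  exists2 s, simple_cycle adjb s & on_edges (cycle_edges s) f && on_edges (cycle_edges s) g.
Proof.
split=> [[fg | [n [c [cc [fc gc]]]]] | [fg | [[|x0 p] // cs /andP [fs gs]]]];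
  [by left | right | by left | right].
  by exists (mkseq c n); [exact/is_cycle_mkseq | apply/andP; split; exact/edge_on_cycle_mkseq].
exists (size (x0 :: p)), (nth x0 (x0 :: p)).
by split; [|split]; [apply/is_cycle_mkseq | apply/edge_on_cycle_mkseq | apply/edge_on_cycle_mkseq];
  rewrite mkseq_nth.
Qed.

Hypotheses (adj_sym : forall x y, adj x y -> adj y x) (adj_irr : forall x, ~ adj x x).

Lemma edge_cong_trans (f g h : V * V) :
  edge_cong adj f g -> edge_cong adj g h -> edge_cong adj f h.
Proof.
have adjb_sym : symmetric adjb by move=> x y; apply/idP/idP => /asboolP/adj_sym/asboolP.
have adjb_irr : irreflexive adjb by move=> x; apply/asboolP/adj_irr.
move=> /edge_congE [fg | [s1 cs1 /andP [fs1 gs1]]] /edge_congE [gh | [s2 cs2 /andP [gs2 hs2]]];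
  apply/edge_congE.
- by left; apply: same_edge_trans gh.
- by right; exists s2; rewrite // (on_edges_same _ fg) gs2.
- by right; exists s1; rewrite // -(on_edges_same _ gh) fs1.
- by right; apply: simple_cycle_exchange cs1 cs2 fs1 gs1 gs2 hs2.
Qed.

Lemma lobe_transitive_of_edge_transitive : edge_transitive adj -> lobe_transitive adj.
Proof.
move=> adj_et e1 e2 e1_adj e2_adj; have [g [g_aut ge1_e2]] := adj_et e1 e2 e1_adj e2_adj.
exists g; split=> // f _; split=> [f_e1 | gf_e2].
  by apply: edge_cong_trans (or_introl ge1_e2); apply: edge_cong_aut.
apply/(edge_cong_autE _ _ g_aut).
exact: edge_cong_trans gf_e2 (or_introl (same_edge_sym ge1_e2)).
Qed.

Lemma lobe_stable_aut g e0 (E : V * V) : is_aut adj g -> edge_cong adj E e0 ->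
  edge_cong adj (g E.1, g E.2) e0 ->
  forall f, edge_cong adj (g f.1, g f.2) e0 <-> edge_cong adj f e0.
Proof.
move=> g_aut E_e0 gE_e0 f; split=> [gf_e0 | f_e0].
  apply: edge_cong_trans E_e0; apply/(edge_cong_autE _ _ g_aut).
  exact: edge_cong_trans gf_e0 (edge_cong_sym gE_e0).
apply: edge_cong_trans gE_e0; apply: edge_cong_aut => //.
exact: edge_cong_trans f_e0 (edge_cong_sym E_e0).
Qed.

Lemma lobe_vertex_aut e0 g v : is_aut adj g ->
  (forall f, edge_cong adj (g f.1, g f.2) e0 <-> edge_cong adj f e0) ->
  lobe_vertex adj e0 v -> lobe_vertex adj e0 (g v).
Proof.
case=> _ g_adj g_e0 [w [vw vw_e0]]; exists (g w).
by split; [exact: (g_adj v w).1 | exact: (g_e0 (v, w)).2].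
Qed.

Lemma lobe_val_inj e0 : injective (@proj1_sig V (lobe_vertex adj e0)).
Proof. by case=> x ? [y ?] /= xy; exact: eq_exist. Qed.

Lemma lobe_aut_restrict e0 g : is_aut adj g ->
  (forall f, edge_cong adj (g f.1, g f.2) e0 <-> edge_cong adj f e0) ->
  exists G, is_aut (@lobe_adj V adj e0) G /\ forall x, proj1_sig (G x) = g (proj1_sig x).
Proof.
move=> g_aut g_e0; have [h [h_aut gK hK]] := is_aut_inv g_aut.
have h_e0 f : edge_cong adj (h f.1, h f.2) e0 <-> edge_cong adj f e0.
  by case: f => a b; have := g_e0 (h a, h b); rewrite /= !hK; apply: iff_sym.
pose G x := exist _ (g (proj1_sig x)) (lobe_vertex_aut g_aut g_e0 (proj2_sig x)).
pose H x := exist _ (h (proj1_sig x)) (lobe_vertex_aut h_aut h_e0 (proj2_sig x)).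
exists G; split=> //; split.
  by exists H => x; apply: lobe_val_inj; rewrite /= ?gK ?hK.
have [_ g_adj] := g_aut; move=> x y; rewrite /lobe_adj /=.
split=> -[xy xy_e0]; split.
- exact: (g_adj _ _).1.
- exact: (g_e0 (_, _)).2.
- exact: (g_adj _ _).2.
- exact: (g_e0 (_, _)).1.
Qed.

Lemma lobe_edge_transitive e0 : edge_transitive adj -> edge_transitive (@lobe_adj V adj e0).
Proof.
move=> adj_et [x1 x2] [y1 y2] /= [x12 x12_e0] [y12 y12_e0].
have [g [g_aut gx_y]] := adj_et (_, _) (_, _) x12 y12.
have gx_e0 := edge_cong_trans (or_introl gx_y) y12_e0.
have [G [G_aut GE]] := lobe_aut_restrict g_aut (lobe_stable_aut g_aut x12_e0 gx_e0).
by exists G; split=> //; apply: (same_edge_inj (@lobe_val_inj e0)); rewrite !GE.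
Qed.

Lemma lobe_arc_transitive e0 : arc_transitive adj -> arc_transitive (@lobe_adj V adj e0).
Proof.
move=> adj_at x1 x2 y1 y2 [x12 x12_e0] [y12 y12_e0].
have [g [g_aut [gx1 gx2]]] := adj_at _ _ _ _ x12 y12.
have gx_e0 : edge_cong adj (g (proj1_sig x1), g (proj1_sig x2)) e0 by rewrite gx1 gx2.
have [G [G_aut GE]] := lobe_aut_restrict g_aut (lobe_stable_aut g_aut x12_e0 gx_e0).
by exists G; split=> //; split; apply: lobe_val_inj; rewrite GE.
Qed.

End Lobes.

Theorem lemma4p1 (V : countType) (adj : V -> V -> Prop) :
  simple_graph adj -> connected_graph adj ->
  (edge_transitive adj ->
     lobe_transitive adj /\
     forall e, is_edge adj e -> edge_transitive (@lobe_adj V adj e)) /\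
  (arc_transitive adj ->
     lobe_transitive adj /\
     forall e, is_edge adj e -> arc_transitive (@lobe_adj V adj e)).
Proof.
move=> [adj_sym adj_irr] _.
split=> [adj_et | adj_at]; split=> [|e _].
- exact: lobe_transitive_of_edge_transitive.
- exact: lobe_edge_transitive.
- exact/lobe_transitive_of_edge_transitive/edge_transitive_of_arc_transitive.
- exact: lobe_arc_transitive.
Qed.
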